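(* Let $(\mathcal{X},d)$ be a Polish metric space and let $(X_N)_{N\in\mathbb{N}}$ be a Markov chain on $\mathcal{X}$ with transition kernel $(P_x)_{x\in\mathcal{X}}$, where $x\mapsto P_x$ is measurable and each $P_x$ has finite first moment. Assume there exists $\kappa>0$ such that $W_1(P_x,P_y)\le(1-\kappa)\,d(x,y)$ for all $x,y\in\mathcal{X}$, and let $\pi$ be the (unique) invariant probability measure of the chain. Let $T\ge1$ and $T_0\ge0$ be integers and set $\hat\pi(f):=\frac1T\sum_{k=T_0+1}^{T_0+T}f(X_k)$. Then for every Lipschitz function $f:\mathcal{X}\to\mathbb{R}$ and every $x\in\mathcal{X}$, \[ |\mathbb{E}_x\hat\pi(f)-\pi(f)|\le\frac{(1-\kappa)^{T_0+1}}{\kappa T}\,E(x)\,\|f\|_{\mathrm{Lip}}. \]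
   Context: $W_1(\mu_1,\mu_2)=\inf_{\xi}\int\!\!\int d(x,y)\,\xi(dx,dy)$, the infimum over couplings $\xi$ of $\mu_1,\mu_2$, is the $L^1$ Wasserstein distance. $\mathbb{E}_x$ denotes expectation for the chain started at $X_0=x$. The eccentricity is $E(x):=\int_{\mathcal{X}}d(x,y)\,\pi(dy)$. $\|f\|_{\mathrm{Lip}}:=\sup_{x\ne y}|f(x)-f(y)|/d(x,y)$, and $\pi(f)=\int f\,d\pi$. *)

From HB Require Import structures.
From mathcomp Require Import all_boot all_order all_algebra.
From mathcomp Require Import all_classical all_reals all_analysis.
From mathcomp Require Import measurable_realfun.
Set Implicit Arguments. Unset Strict Implicit. Unset Printing Implicit Defensive.
Import Order.TTheory GRing.Theory Num.Theory.
Local Open Scope classical_set_scope.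
Local Open Scope ring_scope.

Section Defs.
Context {R : realType} {dT : measure_display} {T : measurableType dT}.

Definition is_metric (d : T -> T -> R) : Prop :=
  [/\ forall x y, 0 <= d x y,
      forall x y, d x y = 0 <-> x = y,
      forall x y, d x y = d y x &
      forall x y z, d x z <= d x y + d y z].

Definition d_ball (d : T -> T -> R) (x : T) (e : R) : set T :=
  [set y | d x y < e].

Definition d_open (d : T -> T -> R) (A : set T) : Prop :=
  forall x, A x -> exists2 e : R, 0 < e & d_ball d x e `<=` A.

Definition d_cauchy (d : T -> T -> R) (u : nat -> T) : Prop :=
  forall e : R, 0 < e -> exists N, forall m n, (N <= m)%N -> (N <= n)%N -> d (u m) (u n) < e.

Definition d_complete (d : T -> T -> R) : Prop :=
  forall u : nat -> T, d_cauchy d u ->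
    exists l, forall e : R, 0 < e -> exists N, forall n, (N <= n)%N -> d (u n) l < e.

Definition d_separable (d : T -> T -> R) : Prop :=
  exists D : set T, countable D /\
    forall x (e : R), 0 < e -> exists2 y, D y & d x y < e.

Definition polish_borel (d : T -> T -> R) : Prop :=
  [/\ is_metric d, d_complete d, d_separable d &
      (@measurable _ T) = <<s d_open d >>].

Definition w_coupling (mu1 mu2 : probability T R) (xi : probability (T * T)%type R) : Prop :=
  (forall A, measurable A -> xi (A `*` setT) = mu1 A) /\
  (forall B, measurable B -> xi (setT `*` B) = mu2 B).

Definition W1 (d : T -> T -> R) (mu1 mu2 : probability T R) : \bar R :=
  ereal_inf [set (\int[xi]_z (d z.1 z.2)%:E)%E
            | xi in [set xi | w_coupling mu1 mu2 xi]].

(* Markov operator: (Q g)(x) = E_x g(X_1) = \int g dP_x *)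
Definition markov_op (P : T -> probability T R) (g : T -> \bar R) : T -> \bar R :=
  fun x => (\int[P x]_y g y)%E.

(* E_x f(X_k) = (Q^k f)(x) *)
Definition chain_expect (P : T -> probability T R) (k : nat) (f : T -> R) (x : T) : \bar R :=
  iter k (markov_op P) (fun y => (f y)%:E) x.

Definition expect_hatpi (P : T -> probability T R) (Tn T0 : nat) (f : T -> R) (x : T) : \bar R :=
  (((Tn%:R)^-1)%:E * \sum_(T0.+1 <= k < (T0 + Tn).+1) chain_expect P k f x)%E.

Definition markov_invariant (P : T -> probability T R) (pi : probability T R) : Prop :=
  forall A, measurable A -> (\int[pi]_x P x A)%E = pi A.

Definition eccentricity (d : T -> T -> R) (pi : probability T R) (x : T) : \bar R :=
  (\int[pi]_y (d x y)%:E)%E.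

(* Lipschitz seminorm (with the convention sup of the empty set = 0) *)
Definition lip_norm (d : T -> T -> R) (f : T -> R) : \bar R :=
  ereal_sup ([set 0%E] `|`
    [set e | exists x y, x <> y /\ e = ((`|f x - f y| / d x y)%:E)]).

End Defs.

From HB Require Import structures.
From mathcomp Require Import all_boot all_order all_algebra.
From mathcomp Require Import all_classical all_reals all_analysis.
From mathcomp Require Import measurable_realfun giry.
From mathcomp Require Import ring lra.
Import Order.TTheory GRing.Theory Num.Theory.
Local Open Scope classical_set_scope.
Local Open Scope ring_scope.

(* The Markov operator [Q g y = \int g dP_y] maps [l]-Lipschitz functions to
   [(1 - kappa) l]-Lipschitz ones: integrating [|g z1 - g z2| <= l d z1 z2]
   against a coupling of [P_y] and [P_z] bounds [|Q g y - Q g z|] by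
   [l W1(P_y, P_z)]. As [pi] is invariant, [pi (Q^k f) = pi f], so
   [|Q^k f x - pi f| <= \int |Q^k f x - Q^k f y| dpi(y) <= (1 - kappa)^k |f|_Lip E(x)],
   and averaging over [k = T0 + 1, ..., T0 + T] leaves a geometric sum. *)

Lemma abs_average_sub_le_geometric {R : realFieldType} (a : nat -> R) (m M c : R)
    (k0 n : nat) :
  0 <= c -> c < 1 -> 0 <= M -> (0 < n)%N -> (forall k, `|a k - m| <= c ^+ k * M) ->
  `|n%:R^-1 * \sum_(k0 <= k < k0 + n) a k - m| <= c ^+ k0 / ((1 - c) * n%:R) * M.
Proof.
move=> c0 c1 M0 n0 ha; have n0' : n%:R != 0 :> R by rewrite pnatr_eq0 -lt0n.
have geom : \sum_(k0 <= k < k0 + n) c ^+ k <= c ^+ k0 / (1 - c).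
  rewrite geometric_partial_tail geometric_seriesE ?lt_eqF//=.
  rewrite ler_pM2r ?invr_gt0 ?subr_gt0// ler_piMr ?exprn_ge0//.
  by rewrite lerBlDr lerDl exprn_ge0.
have -> : n%:R^-1 * \sum_(k0 <= k < k0 + n) a k - m =
    n%:R^-1 * \sum_(k0 <= k < k0 + n) (a k - m).
  by rewrite sumrB sumr_const_nat addKn mulrBr -[m *+ n]mulr_natr mulrCA mulVf ?mulr1.
rewrite normrM ger0_norm ?invr_ge0//.
apply: le_trans (ler_wpM2l _ (ler_norm_sum _ _ _)) _; first by rewrite invr_ge0.
apply: le_trans (ler_wpM2l _ (ler_sum _ (fun k _ => ha k))) _; first by rewrite invr_ge0.
have -> : c ^+ k0 / ((1 - c) * n%:R) * M = n%:R^-1 * (c ^+ k0 / (1 - c) * M).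
  by rewrite invfM; ring.
by rewrite ler_wpM2l ?invr_ge0// -mulr_suml ler_wpM2r.
Qed.

Definition lipschitz_with {R : numDomainType} {T : Type} (d : T -> T -> R) (l : R)
    (g : T -> R) : Prop :=
  forall u v, `|g u - g v| <= l * d u v.

(* [fine] sends infinite integrals to [0]; [markov_opR P g] is only used for
   [P y]-integrable [g]. *)
Definition markov_opR {R : realType} {dT : measure_display} {X : measurableType dT}
    (P : X -> probability X R) (g : X -> R) : X -> R :=
  fun y => fine (\int[P y]_z (g z)%:E)%E.

Lemma lipschitz0_eq {R : numDomainType} {T : Type} {d : T -> T -> R} {g : T -> R} u v :
  lipschitz_with d 0 g -> g u = g v.
Proof.
move=> hg; apply/eqP; rewrite -subr_eq0 -normr_eq0 eq_le normr_ge0 andbT.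
by have := hg u v; rewrite mul0r.
Qed.

Section integral_lemmas.
Context {R : realType} {dT : measure_display} {X : measurableType dT}.
Local Open Scope ereal_scope.

Lemma probability_integral_cst (mu : probability X R) (r : R) :
  \int[mu]_x r%:E = r%:E.
Proof.
rewrite integral_cst//; transitivity (r%:E * 1); last by rewrite mule1.
by congr (_ * _); exact: probability_setT.
Qed.

(* Unlike in [ge0_le_integral], the upper bound need not be measurable. *)
Lemma ge0_le_integral_nomeas (mu : {measure set X -> \bar R}) (f1 f2 : X -> \bar R) :
  (forall x, 0 <= f1 x) -> (forall x, f1 x <= f2 x) ->
  \int[mu]_x f1 x <= \int[mu]_x f2 x.
Proof.
move=> f10 f12; have f20 x : 0 <= f2 x by exact: le_trans (f10 x) (f12 x).
rewrite !ge0_integralTE//; apply: le_ereal_sup => _ [h hf1 <-].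
by exists h => //= x; exact: le_trans (hf1 x) (f12 x).
Qed.

Lemma integral_image_measure {dY : measure_display} {Y : measurableType dY}
    (xi : {measure set Y -> \bar R}) (mu : {measure set X -> \bar R})
    (phi : Y -> X) (g : X -> R) :
  measurable_fun [set: Y] phi ->
  (forall A, measurable A -> xi (phi @^-1` A) = mu A) ->
  measurable_fun [set: X] g -> mu.-integrable [set: X] (EFin \o g) ->
  xi.-integrable [set: Y] (EFin \o (g \o phi)) /\
  \int[xi]_p (g (phi p))%:E = \int[mu]_z (g z)%:E.
Proof.
move=> mphi ximu mg ig.
have muE : forall A, measurable A -> mu A = pushforward xi phi A.
  by move=> A mA; rewrite /pushforward ximu.
have mgphi : measurable_fun [set: Y] (EFin \o (g \o phi)).
  by apply/measurable_EFinP; exact: measurableT_comp.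
have ixi : xi.-integrable [set: Y] (EFin \o (g \o phi)).
  apply/integrableP; split => //; move/integrableP: ig => [_].
  rewrite (eq_measure_integral (pushforward xi phi)); last by move=> A mA _; exact: muE.
  rewrite ge0_integral_pushforward//.
  by apply: measurableT_comp => //; exact/measurable_EFinP.
split => //.
rewrite [RHS](eq_measure_integral (pushforward xi phi)); last first.
  by move=> A mA _; exact: muE.
by rewrite [RHS]integral_pushforward//; exact/measurable_EFinP.
Qed.

End integral_lemmas.

Lemma d_open_lipschitz_gt {R : realType} {dT : measure_display} {X : measurableType dT}
    (d : X -> X -> R) (g : X -> R) (l a : R) :
  0 <= l -> lipschitz_with d l g -> d_open d [set y | a < g y].
Proof.
move=> l0 hg y /= ay; exists ((g y - a) / (l + 1)).
  by apply: divr_gt0; rewrite ?subr_gt0// ltr_wpDl.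
move=> z /= dz.
have gyz : g y - g z <= l * d y z by apply: le_trans (ler_norm _) (hg _ _).
have ldyz : l * d y z <= l * ((g y - a) / (l + 1)) by rewrite ler_wpM2l// ltW.
have : l * ((g y - a) / (l + 1)) < g y - a.
  by rewrite mulrA ltr_pdivrMr ?ltr_wpDl// mulrC ltr_pM2l ?subr_gt0// ltrDl.
lra.
Qed.

Section lipschitz_functions.
Context {R : realType} {dT : measure_display} {X : measurableType dT}.
Context {d : X -> X -> R}.
Hypothesis d_metric : is_metric d.
Hypothesis d_borel : (@measurable _ X) = <<s d_open d >>.

Lemma dist_ge0 u v : 0 <= d u v.
Proof. by case: d_metric => + _ _ _; apply. Qed.

Lemma lip_norm_lipschitz (g : X -> R) : (lip_norm d g < +oo)%E ->
  exists2 l, lip_norm d g = l%:E & 0 <= l /\ lipschitz_with d l g.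
Proof.
move=> gfin; have L0 : (0 <= lip_norm d g)%E by apply: ereal_sup_ubound; left.
exists (fine (lip_norm d g)); first by rewrite fineK// ge0_fin_numE.
split; first exact: fine_ge0.
case: d_metric => _ deq _ _ u v.
have [<-|uv] := eqVneq u v; first by rewrite subrr normr0 (deq u u).2// mulr0.
have duv : 0 < d u v.
  by rewrite lt_def dist_ge0 andbT; apply: contra_neq uv => /deq.
rewrite -ler_pdivrMr// -lee_fin fineK ?ge0_fin_numE//.
by apply: ereal_sup_ubound; right; exists u, v; split => //; exact/eqP.
Qed.

Lemma W1_ge0 (mu1 mu2 : probability X R) : (0 <= W1 d mu1 mu2)%E.
Proof.
by apply/ereal_infP => _ [xi _ <-]; apply: integral_ge0 => p _; rewrite lee_fin dist_ge0.
Qed.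

Lemma measurable_lipschitz {g : X -> R} {l : R} :
  0 <= l -> lipschitz_with d l g -> measurable_fun [set: X] g.
Proof.
move=> l0 hg.
have mgt a : measurable [set y | a < g y].
  by rewrite d_borel; apply: sub_sigma_algebra; exact: d_open_lipschitz_gt hg.
apply: (@measurability _ _ _ _ _ _ (@ocitv R)) => //.
move=> _ [_ [[a b] _ <-] <-]; rewrite setTI.
have -> : g @^-1` `]a, b]%classic = [set y | a < g y] `\` [set y | b < g y].
  apply/seteqP; split => y /=; rewrite in_itv /=.
    by move=> /andP[h1 h2]; split => //; apply/negP; rewrite -leNgt.
  by move=> [h1 /negP]; rewrite -leNgt => h2; apply/andP.
exact: measurableD.
Qed.

Lemma lipschitz_dist (x0 : X) : lipschitz_with d 1 (d x0).
Proof.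
case: d_metric => _ _ ds dt u v; rewrite mul1r.
have h1 := dt x0 u v; have := dt x0 v u; rewrite (ds v u) => h2.
by rewrite ler_norml; apply/andP; split; lra.
Qed.

Lemma measurable_dist (x0 : X) : measurable_fun [set: X] (d x0).
Proof. exact: measurable_lipschitz ler01 (lipschitz_dist x0). Qed.

Lemma integrable_lipschitz (mu : probability X R) (g : X -> R) (l : R) (x0 : X) :
  0 <= l -> lipschitz_with d l g -> (\int[mu]_z (d x0 z)%:E < +oo)%E ->
  mu.-integrable [set: X] (EFin \o g).
Proof.
move=> l0 hg hfin.
have idist : mu.-integrable [set: X] (EFin \o d x0).
  apply/integrableP; split; first exact/measurable_EFinP/measurable_dist.
  by under eq_integral do rewrite /= ger0_norm ?dist_ge0//.
apply: (@le_integrable _ _ _ _ _ measurableT _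
    (fun z => ((`|g x0|)%:E + l%:E * (d x0 z)%:E)%E)).
- by apply/measurable_EFinP; exact: measurable_lipschitz l0 hg.
- move=> z _ /=; rewrite lee_fin [leRHS]ger0_norm ?addr_ge0 ?mulr_ge0 ?dist_ge0//.
  have := hg z x0; case: d_metric => _ _ -> _.
  have := ler_normD (g x0) (g z - g x0); rewrite [g x0 + _]addrC subrK; lra.
- apply: integrableD => //; first exact: finite_measure_integrable_cst.
  exact: integrableZl.
Qed.

Lemma lipschitz_abs_sub_mean (mu : probability X R) (g : X -> R) (l e m : R) (x : X) :
  0 <= l -> lipschitz_with d l g ->
  (\int[mu]_y (d x y)%:E = e%:E)%E -> (\int[mu]_y (g y)%:E = m%:E)%E ->
  `|g x - m| <= l * e.
Proof.
move=> l0 hg he hm.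
have ig : mu.-integrable [set: X] (EFin \o g).
  by apply: (integrable_lipschitz _ _ _ x l0 hg); rewrite he ltry.
have mg := measurable_lipschitz l0 hg.
rewrite -lee_fin -abse_EFin.
have -> : (g x - m)%:E = (\int[mu]_y ((g x)%:E - (g y)%:E))%E.
  rewrite integralB_EFin//; last exact: finite_measure_integrable_cst.
  by rewrite probability_integral_cst hm.
apply: le_trans (le_abse_integral _ _ _) _ => //.
  by apply/measurable_EFinP; apply: measurable_funB => //; exact: measurable_cst.
rewrite EFinM -he -integralZl//; last first.
  apply/integrableP; split; first exact/measurable_EFinP/measurable_dist.
  by under eq_integral do rewrite /= ger0_norm ?dist_ge0//; rewrite he ltry.
apply: ge0_le_integral => //.
- apply: measurableT_comp => //; apply: emeasurable_funB => //; exact/measurable_EFinP.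
- by apply: measurable_funeM; exact/measurable_EFinP/measurable_dist.
- by move=> y _; rewrite /= -EFinM lee_fin; exact: hg.
Qed.

End lipschitz_functions.

Section kantorovich.
Context {R : realType} {dT : measure_display} {X : measurableType dT}.
Context {d : X -> X -> R}.
Hypothesis d_borel : (@measurable _ X) = <<s d_open d >>.
Local Open Scope ereal_scope.

Lemma lipschitz_integral_le_W1 (mu1 mu2 : probability X R) (g : X -> R) (l : R) :
  (0 < l)%R -> lipschitz_with d l g ->
  mu1.-integrable [set: X] (EFin \o g) -> mu2.-integrable [set: X] (EFin \o g) ->
  `|\int[mu1]_z (g z)%:E - \int[mu2]_z (g z)%:E| <= l%:E * W1 d mu1 mu2.
Proof.
move=> l_gt0 hg i1 i2; have mg := measurable_lipschitz d_borel (ltW l_gt0) hg.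
rewrite /W1 -ereal_inf_pZl//; apply/ereal_infP => _ [_ [xi [xi1 xi2] <-] <-].
have [i1xi e1] : xi.-integrable [set: X * X] (EFin \o (g \o fst)) /\
    \int[xi]_p (g p.1)%:E = \int[mu1]_z (g z)%:E.
  apply: integral_image_measure => // A mA.
  rewrite -[fst @^-1` A]setXT; exact: xi1.
have [i2xi e2] : xi.-integrable [set: X * X] (EFin \o (g \o snd)) /\
    \int[xi]_p (g p.2)%:E = \int[mu2]_z (g z)%:E.
  apply: integral_image_measure => // B mB.
  rewrite -[snd @^-1` B]setTX; exact: xi2.
pose h (p : X * X) := ((g p.1 - g p.2) / l)%R.
have mh : measurable_fun [set: X * X] (EFin \o h).
  apply/measurable_EFinP/measurable_funM => //.
  by apply: measurable_funB; exact: measurableT_comp.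
(* Dividing by [l] avoids rescaling the coupling cost, whose integrand need not
   be measurable. *)
have invl_ge0 : 0 <= l^-1%:E by rewrite lee_fin invr_ge0 ltW.
rewrite -lee_pdivrMl// -(gee0_abs invl_ge0) -abseM.
have -> : l^-1%:E * (\int[mu1]_z (g z)%:E - \int[mu2]_z (g z)%:E) =
    \int[xi]_p (h p)%:E.
  rewrite -e1 -e2 -integralB_EFin// -integralZl//; last exact: integrableB.
  by apply: eq_integral => p _; rewrite -EFinB -EFinM mulrC.
apply: le_trans (le_abse_integral _ _ mh) _ => //.
apply: ge0_le_integral_nomeas => p; first exact: abse_ge0.
rewrite /= lee_fin /h normrM [`|l^-1|%R]gtr0_norm ?invr_gt0//.
by rewrite ler_pdivrMr// mulrC; exact: hg.
Qed.

End kantorovich.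

Section invariant_measure.
Context {R : realType} {dT : measure_display} {X : measurableType dT}.
Context {P : X -> probability X R} { pi : probability X R }.
Hypothesis measurable_P : forall A, measurable A -> measurable_fun [set: X] (P ^~ A).
Hypothesis pi_invariant : markov_invariant P pi.
Local Open Scope ereal_scope.

(* Invariance says that the bind [pi >>= P] of the Giry monad is [pi]. *)
Lemma invariant_integral_ge0 (h : X -> \bar R) :
  (forall z, 0 <= h z) -> measurable_fun [set: X] h ->
  \int[pi]_y (\int[P y]_z h z) = \int[pi]_z h z.
Proof.
move=> h0 mh.
pose Pg : X -> giry X R := fun y => P y.
have mPg : measurable_fun [set: X] Pg by exact: measurable_giry_codensity.
pose pig : giry X R := pi.
have bindE A : measurable A -> giry_bind pig mPg A = pi A.
  move=> mA; rewrite -pi_invariant//.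
  transitivity (\int[giry_bind pig mPg]_z (\1_A z)%:E).
    by rewrite integral_indic// setIT.
  rewrite [LHS](@giry_int_bind _ _ _ _ R pig Pg mPg); last 2 first.
  - exact/measurable_EFinP/measurable_indic.
  - by move=> z; rewrite lee_fin.
  by apply: eq_integral => y _; rewrite /giry_int integral_indic// setIT.
rewrite -[LHS](@giry_int_bind _ _ _ _ R pig Pg mPg)//.
by apply: eq_measure_integral => A mA _; exact: bindE.
Qed.

Lemma invariant_integral (g : X -> R) :
  measurable_fun [set: X] g -> pi.-integrable [set: X] (EFin \o g) ->
  (forall y, (P y).-integrable [set: X] (EFin \o g)) ->
  \int[pi]_y (markov_opR P g y)%:E = \int[pi]_y (g y)%:E.
Proof.
move=> mg ipi iP; have mG : measurable_fun [set: X] (EFin \o g) by exact/measurable_EFinP.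
have iPpi (h : X -> \bar R) : (forall z, 0 <= h z) -> measurable_fun [set: X] h ->
    \int[pi]_z h z < +oo -> pi.-integrable [set: X] (fun y => \int[P y]_z h z).
  move=> h0 mh hfin; apply/integrableP; split.
    exact: measurable_fun_integral_kernel.
  under eq_integral do rewrite gee0_abs ?integral_ge0//.
  by rewrite invariant_integral_ge0.
transitivity (\int[pi]_y ((fun y => \int[P y]_z (EFin \o g)^\+ z) \-
                        (fun y => \int[P y]_z (EFin \o g)^\- z)) y).
  apply: eq_integral => y _; rewrite /markov_opR fineK; first exact: integralE.
  exact: integrable_fin_num (iP y).
rewrite integralB//; last 2 first.
- apply: iPpi; [exact: funepos_ge0|exact: measurable_funepos|].
  exact: integral_funepos_lt_pinfty.
- apply: iPpi; [exact: funeneg_ge0|exact: measurable_funeneg|].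
  exact: integral_funeneg_lt_pinfty.
rewrite [RHS]integralE !invariant_integral_ge0//.
- exact: measurable_funeneg.
- exact: measurable_funepos.
Qed.

End invariant_measure.

Section contracting_chain.
Context {R : realType} {dT : measure_display} {X : measurableType dT}.
Context {d : X -> X -> R} {P : X -> probability X R} {c : R}.
Hypothesis d_metric : is_metric d.
Hypothesis d_borel : (@measurable _ X) = <<s d_open d >>.
Hypothesis P_moment : forall y, (\int[P y]_z (d y z)%:E < +oo)%E.
Hypothesis P_contraction : forall y z, (W1 d (P y) (P z) <= (c * d y z)%:E)%E.

Lemma contraction_lt0_eq (y z : X) : c < 0 -> y = z.
Proof.
move=> c0; case: d_metric => _ deq _ _; apply/deq/eqP.
rewrite eq_le dist_ge0// andbT -(ler_nM2l c0) mulr0 -lee_fin.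
exact: le_trans (W1_ge0 d_metric _ _) (P_contraction y z).
Qed.

Lemma integrable_kernel_lipschitz {g : X -> R} {l : R} y :
  0 <= l -> lipschitz_with d l g -> (P y).-integrable [set: X] (EFin \o g).
Proof.
by move=> l0 hg; exact: integrable_lipschitz d_metric d_borel _ _ _ y l0 hg (P_moment y).
Qed.

Lemma markov_opRE {g : X -> R} {l : R} y : 0 <= l -> lipschitz_with d l g ->
  (\int[P y]_z (g z)%:E)%E = (markov_opR P g y)%:E.
Proof.
move=> l0 hg; rewrite fineK//.
by apply: integrable_fin_num => //; exact: integrable_kernel_lipschitz l0 hg.
Qed.

Lemma lipschitz_markov_opR {g : X -> R} {l : R} :
  0 <= l -> lipschitz_with d l g -> lipschitz_with d (c * l) (markov_opR P g).
Proof.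
move=> l0 hg u v; have [l00|lpos] := eqVneq l 0.
  subst l; have gu w : markov_opR P g w = g u.
    rewrite /markov_opR (eq_integral (fun=> (g u)%:E)) ?probability_integral_cst//.
    by move=> z _; rewrite (lipschitz0_eq z u hg).
  by rewrite !gu subrr normr0 mulr0 mul0r.
have l_gt0 : 0 < l by rewrite lt_def lpos l0.
have := lipschitz_integral_le_W1 d_borel (P u) (P v) g l l_gt0 hg
  (integrable_kernel_lipschitz u l0 hg) (integrable_kernel_lipschitz v l0 hg).
rewrite !(markov_opRE _ l0 hg) -EFinB abse_EFin => h.
have := le_trans h (@lee_wpmul2l _ l%:E (ltW l_gt0) _ _ (P_contraction u v)).
by rewrite -EFinM lee_fin mulrCA mulrA.
Qed.

Lemma lipschitz_iter_markov_opR {f : X -> R} {l : R} k :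
  0 <= c -> 0 <= l -> lipschitz_with d l f ->
  lipschitz_with d (c ^+ k * l) (iter k (markov_opR P) f).
Proof.
move=> c0 l0 hf; elim: k => [|k IH]; first by rewrite expr0 mul1r.
rewrite iterS exprS -mulrA; apply: lipschitz_markov_opR => //.
by rewrite mulr_ge0 ?exprn_ge0.
Qed.

Lemma chain_expectE (f : X -> R) (l : R) k y :
  0 <= c -> 0 <= l -> lipschitz_with d l f ->
  chain_expect P k f y = (iter k (markov_opR P) f y)%:E.
Proof.
move=> c0 l0 hf; elim: k y => [//|k IH] y.
rewrite /chain_expect iterS /markov_op [in RHS]iterS.
transitivity (\int[P y]_z (iter k (markov_opR P) f z)%:E)%E.
  by apply: eq_integral => z _; exact: IH.
apply: (markov_opRE y _ (lipschitz_iter_markov_opR k c0 l0 hf)).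
by rewrite mulr_ge0 ?exprn_ge0.
Qed.

Section invariant.
Context { pi : probability X R }.
Hypothesis measurable_P : forall A, measurable A -> measurable_fun [set: X] (P ^~ A).
Hypothesis pi_invariant : markov_invariant P pi.

Lemma integral_iter_markov_opR {f : X -> R} {l : R} {x0 : X} k :
  0 <= c -> 0 <= l -> lipschitz_with d l f -> (\int[pi]_y (d x0 y)%:E < +oo)%E ->
  (\int[pi]_y (iter k (markov_opR P) f y)%:E = \int[pi]_y (f y)%:E)%E.
Proof.
move=> c0 l0 hf hpi; elim: k => [//|k <-].
have lk0 : 0 <= c ^+ k * l by rewrite mulr_ge0 ?exprn_ge0.
have hk := lipschitz_iter_markov_opR k c0 l0 hf.
rewrite iterS; apply: invariant_integral => //.
- exact (measurable_lipschitz d_borel lk0 hk).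
- exact (integrable_lipschitz d_metric d_borel pi _ _ x0 lk0 hk hpi).
- by move=> y; exact (integrable_kernel_lipschitz y lk0 hk).
Qed.

Lemma eccentricity_lt_pinfty (x : X) : c = 0 -> (eccentricity d pi x < +oo)%E.
Proof.
move=> c0; have := lipschitz_markov_opR ler01 (lipschitz_dist d_metric x).
rewrite c0 mul0r => Qd_cst.
rewrite /eccentricity -(invariant_integral_ge0 measurable_P pi_invariant)//; last 2 first.
- by move=> y; rewrite lee_fin dist_ge0.
- exact/measurable_EFinP/measurable_dist.
rewrite (eq_integral (fun=> (markov_opR P (d x) x)%:E)) ?probability_integral_cst ?ltry//.
move=> y _; rewrite (markov_opRE y ler01 (lipschitz_dist d_metric x)).
by rewrite (lipschitz0_eq y x Qd_cst).
Qed.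

Lemma expect_hatpi_bias (Tn T0 : nat) (f : X -> R) (l e : R) (x : X) :
  0 <= c -> c < 1 -> (0 < Tn)%N -> 0 <= l -> lipschitz_with d l f ->
  eccentricity d pi x = e%:E ->
  (`| expect_hatpi P Tn T0 f x - \int[pi]_y (f y)%:E |
     <= (c ^+ T0.+1 / ((1 - c) * Tn%:R))%:E * e%:E * l%:E)%E.
Proof.
move=> c0 c1 Tn0 l0 hf he.
have e0 : 0 <= e.
  by rewrite -lee_fin -he; apply: integral_ge0 => y _; rewrite lee_fin dist_ge0.
have hpi : (\int[pi]_y (d x y)%:E < +oo)%E.
  by move: he; rewrite /eccentricity => ->; exact: ltry.
have [m hm] : exists m, (\int[pi]_y (f y)%:E = m%:E)%E.
  exists (fine (\int[pi]_y (f y)%:E)); rewrite fineK//; apply: integrable_fin_num => //.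
  exact: integrable_lipschitz d_metric d_borel _ _ _ x l0 hf hpi.
have dev k : `|iter k (markov_opR P) f x - m| <= c ^+ k * (l * e).
  rewrite mulrA; apply: (lipschitz_abs_sub_mean d_metric d_borel pi _ _ _ _ x _
    (lipschitz_iter_markov_opR k c0 l0 hf) he).
  - by rewrite mulr_ge0 ?exprn_ge0.
  - by rewrite (integral_iter_markov_opR k c0 l0 hf hpi).
rewrite /expect_hatpi (eq_bigr (fun k => (iter k (markov_opR P) f x)%:E)); last first.
  by move=> k _; exact: chain_expectE c0 l0 hf.
rewrite sumEFin hm -!EFinM -EFinB abse_EFin lee_fin -addSn -mulrA [e * l]mulrC.
by apply: abs_average_sub_le_geometric => //; exact: mulr_ge0.
Qed.

End invariant.

End contracting_chain.

Lemma expect_hatpi_sub_mean_cst {R : realType} {dT : measure_display}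
    {X : measurableType dT} (P : X -> probability X R) (pi : probability X R)
    (Tn T0 : nat) (f : X -> R) (a : R) (x : X) :
  (0 < Tn)%N -> (forall y, f y = a) ->
  (`|expect_hatpi P Tn T0 f x - \int[pi]_y (f y)%:E| = 0)%E.
Proof.
move=> Tn0 fa.
have chain_cst k y : chain_expect P k f y = a%:E.
  elim: k y => [|k IH] y; first by rewrite /chain_expect /= fa.
  rewrite /chain_expect iterS /markov_op -[RHS](probability_integral_cst (P y)).
  by apply: eq_integral => z _; exact: IH.
rewrite /expect_hatpi (eq_bigr (fun=> a%:E)); last by move=> k _; exact: chain_cst.
rewrite sumEFin sumr_const_nat subSS addKn -EFinM -[a *+ Tn]mulr_natl mulrA mulVf.
  rewrite mul1r (eq_integral (fun=> a%:E)); last by move=> y _; rewrite fa.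
  by rewrite probability_integral_cst subee// abse0.
by rewrite pnatr_eq0 -lt0n.
Qed.

Theorem proposition1 (R : realType) (dT : measure_display) (X : measurableType dT)
  (d : X -> X -> R) (P : X -> probability X R) (kappa : R)
  (pi : probability X R) (Tn T0 : nat) (f : X -> R) (x : X) :
  polish_borel d ->
  (forall A, measurable A -> measurable_fun [set: X] (P ^~ A)) ->
  (forall y, (\int[P y]_z (d y z)%:E < +oo)%E) ->
  0 < kappa ->
  (forall y z, (W1 d (P y) (P z) <= ((1 - kappa) * d y z)%:E)%E) ->
  markov_invariant P pi ->
  (1 <= Tn)%N ->
  (lip_norm d f < +oo)%E ->
  (`| expect_hatpi P Tn T0 f x - \int[pi]_y (f y)%:E |
     <= ((1 - kappa) ^+ T0.+1 / (kappa * Tn%:R))%:E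
        * eccentricity d pi x * lip_norm d f)%E.
Proof.
move=> [hm _ _ hs] hP hmom k0 hW hinv Tn0 /(lip_norm_lipschitz hm)[l -> [l0 hf]].
have E0 : (0 <= eccentricity d pi x)%E.
  by apply: integral_ge0 => y _; rewrite lee_fin dist_ge0.
have [kappa_gt1|kappa_le1] := ltP 1 kappa.
  have pt (y : X) : y = x by apply: (contraction_lt0_eq hm hW); rewrite subr_lt0.
  rewrite (expect_hatpi_sub_mean_cst _ _ _ _ _ (f x))//; last by move=> y; rewrite (pt y).
  rewrite /eccentricity (eq_integral (fun=> 0%E)) ?integral0 ?mule0 ?mul0e//.
  by move=> y _; rewrite (pt y); case: hm => _ deq _ _; rewrite (deq x x).2.
have c0 : 0 <= 1 - kappa by rewrite subr_ge0.
have c1 : 1 - kappa < 1 by rewrite ltrBlDr ltrDl.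
case E : (eccentricity d pi x) => [e| |]; last by rewrite E in E0.
  by have := expect_hatpi_bias hm hs hmom hW hP hinv Tn T0 f l e x c0 c1 Tn0 l0 hf E;
    rewrite subKr.
have [l_gt0|l_le0] := ltP 0 l; last first.
  have l0E : l = 0 by apply/le_anti/andP.
  subst l; rewrite (expect_hatpi_sub_mean_cst _ _ _ _ _ (f x)) ?mule0// => y.
  exact: lipschitz0_eq y x hf.
(* As the eccentricity is finite for [kappa = 1], the bound here is [+oo]. *)
have c_gt0 : 0 < 1 - kappa.
  rewrite lt_def c0 andbT; apply/eqP => c_eq0.
  by have := eccentricity_lt_pinfty hm hs hmom hW hP hinv x c_eq0; rewrite E.
rewrite gt0_muley ?lte_fin ?divr_gt0 ?exprn_gt0 ?mulr_gt0 ?ltr0n//.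
by rewrite gt0_mulye ?lte_fin// leey.
Qed.
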